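(* Let $Y$ be a rank-two $\mathbb{Q}$-graded matrix factorisation of $x^3 + y^4 - u^{12} - v^2$. Suppose that (i) $Y$ has non-zero (left and right) quantum dimensions and (ii) when setting $u$ to zero, $Y$ is equal to $X_0 = (R^2\oplus R^2, d_{X_0})$ with $$d_{X_0}^1 = \begin{pmatrix} y^2-v & -x \\ x^2 & y^2+v \end{pmatrix}, \qquad d_{X_0}^0 = (d_{X_0}^1)^\# .$$ Then $Y$ is isomorphic in $\operatorname{hmf}^{\mathrm{gr}}(\mathbb{C}[u,v,x,y],\,x^3 + y^4 - u^{12} - v^2)$ to $X_u = (R^2\oplus R^2, d_{X_u})$ with $d_{X_u}^0 = (d_{X_u}^1)^\#$ and $d_{X_u}^1 = \begin{pmatrix} a&b\\ c&d\end{pmatrix}$, where $$a = y^2-v + \tfrac12 x (s u)^2 + \tfrac{2t+1}{8} (s u)^6,\qquad b = -x + y (s u) + \tfrac{t+1}{4} (s u)^4,$$ $$c = x^2 + y x (s u) + \tfrac{t}{4} x (su)^4 + \tfrac{2t+1}{4} y (su)^5 - \tfrac{9t+5}{48} (su)^8,\qquad d = y^2+v + \tfrac12 x (s u)^2 + \tfrac{2t+1}{8} (s u)^6,$$ for some solution $s,t\in\mathbb{C}$ of $t^2 = \tfrac13$, $s^{12} = -576\,(26\,t - 15)$.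
   Context: Work over $\mathbb{C}$ with $R=\mathbb{C}[u,v,x,y]$ graded by $|u|=1/6$, $|v|=1$, $|y|=1/2$, $|x|=2/3$, so that $W(x,y)=x^3+y^4$ (the $E_6$ potential) and $V(u,v)=u^{12}+v^2$ (the $A_{11}$ potential) both have degree 2. A matrix factorisation of $W-V$ on $R^2\oplus R^2$ has twisted differential $d=\begin{pmatrix}0&d^1\\ d^0&0\end{pmatrix}$ with $d\circ d=(W-V)\cdot 1$; it is $\mathbb{Q}$-graded if the module is $\mathbb{Q}$-graded compatibly with $R$ and $d$ has degree 1. $M^\#$ denotes the adjunct (adjugate) matrix. The left and right quantum dimensions of a finite-rank matrix factorisation $X$ of $W(y_1,\dots,y_n)-V(x_1,\dots,x_m)$ are $\dim_l(X) = (-1)^{\binom{m+1}{2}}\mathrm{Res}\big[\mathrm{str}(\partial_{x_1}d_X\cdots\partial_{x_m}d_X\,\partial_{y_1}d_X\cdots\partial_{y_n}d_X)\,dy/(\partial_{y_1}W,\dots,\partial_{y_n}W)\big]$ and $\dim_r(X) = (-1)^{\binom{n+1}{2}}\mathrm{Res}\big[\mathrm{str}(\partial_{x_1}d_X\cdots\partial_{x_m}d_X\,\partial_{y_1}d_X\cdots\partial_{y_n}d_X)\,dx/(\partial_{x_1}V,\dots,\partial_{x_m}V)\big]$, here with variables $(u,v)$ for $V$ and $(x,y)$ for $W$. $\operatorname{hmf}^{\mathrm{gr}}$ is the homotopy category of graded matrix factorisations (homotopy equivalent to finite rank). *)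

From HB Require Import structures.
From mathcomp Require Import all_boot all_order all_algebra.
From mathcomp Require Import reals.
From mathcomp Require Import complex.
From mathcomp.multinomials Require Import mpoly.

Set Implicit Arguments.
Unset Strict Implicit.
Unset Printing Implicit Defensive.

Import Order.TTheory GRing.Theory Num.Theory.
Local Open Scope ring_scope.

Section MF.
Variable C : fieldType.

Notation Rg := {mpoly C[4]}.

Definition iu : 'I_4 := inord 0.
Definition iv : 'I_4 := inord 1.
Definition ix : 'I_4 := inord 2.
Definition iy : 'I_4 := inord 3.

Definition pu : Rg := 'X_iu.
Definition pv : Rg := 'X_iv.
Definition px : Rg := 'X_ix.
Definition py : Rg := 'X_iy.

Definition weight (i : 'I_4) : rat :=
  if i == iu then 1 / 6%:R
  else if i == iv then 1
  else if i == ix then 2%:R / 3%:R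
  else 1 / 2%:R.

Definition wdeg (m : 'X_{1..4}) : rat := \sum_(i < 4) (m i)%:R * weight i.

(* p is homogeneous of degree q (the zero polynomial is homogeneous of every degree) *)
Definition whomog (q : rat) (p : Rg) : Prop :=
  forall m, m \in msupp p -> wdeg m = q.

Definition Wpot : Rg := px ^+ 3 + py ^+ 4.
Definition Vpot : Rg := pu ^+ 12 + pv ^+ 2.

(* A rank-two matrix factorisation on R^2 (+) R^2 is given by
   d^0 : X^0 -> X^1 and d^1 : X^1 -> X^0, the twisted differential being
   d = [[0, d^1], [d^0, 0]] acting on X^0 (+) X^1 (column vectors). *)
Definition twdiff (d0 d1 : 'M[Rg]_2) : 'M[Rg]_(2 + 2) := block_mx 0 d1 d0 0.

Definition is_mf (P : Rg) (d0 d1 : 'M[Rg]_2) : Prop :=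
  twdiff d0 d1 *m twdiff d0 d1 = P%:M.

(* A map f : M -> N between free graded modules with bases of degrees qM, qN
   is homogeneous of degree k when each entry f i j is homogeneous of degree
   k + qN i - qM j. *)
Definition mx_homog (k : rat) (qN qM : 'I_(2 + 2) -> rat)
  (f : 'M[Rg]_(2 + 2)) : Prop :=
  forall i j, whomog (k + qN i - qM j) (f i j).

Definition graded_mf (q : 'I_(2 + 2) -> rat) (d0 d1 : 'M[Rg]_2) : Prop :=
  mx_homog 1 q q (twdiff d0 d1).

Definition even_mx (f : 'M[Rg]_(2 + 2)) : Prop :=
  ursubmx f = 0 /\ dlsubmx f = 0.
Definition odd_mx (f : 'M[Rg]_(2 + 2)) : Prop :=
  ulsubmx f = 0 /\ drsubmx f = 0.

Definition gr_morph (qM : 'I_(2+2) -> rat) (dM : 'M[Rg]_(2+2))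
  (qN : 'I_(2+2) -> rat) (dN : 'M[Rg]_(2+2)) (f : 'M[Rg]_(2+2)) : Prop :=
  even_mx f /\ mx_homog 0 qN qM f /\ dN *m f = f *m dM.

Definition gr_homotopic (qM : 'I_(2+2) -> rat) (dM : 'M[Rg]_(2+2))
  (qN : 'I_(2+2) -> rat) (dN : 'M[Rg]_(2+2)) (f g : 'M[Rg]_(2+2)) : Prop :=
  exists h : 'M[Rg]_(2+2),
    odd_mx h /\ mx_homog (-1) qN qM h /\ f - g = dN *m h + h *m dM.

Definition hmf_gr_iso (qM : 'I_(2+2) -> rat) (dM : 'M[Rg]_(2+2))
  (qN : 'I_(2+2) -> rat) (dN : 'M[Rg]_(2+2)) : Prop :=
  exists (f g : 'M[Rg]_(2+2)),
    gr_morph qM dM qN dN f /\ gr_morph qN dN qM dM g /\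
    gr_homotopic qM dM qM dM (g *m f) 1%:M /\
    gr_homotopic qN dN qN dN (f *m g) 1%:M.

Definition supertr (f : 'M[Rg]_(2 + 2)) : Rg := \tr (ulsubmx f) - \tr (drsubmx f).

Definition dmx (i : 'I_4) (f : 'M[Rg]_(2 + 2)) : 'M[Rg]_(2 + 2) :=
  map_mx (mderiv i) f.

Definition qdim_integrand (D : 'M[Rg]_(2 + 2)) : Rg :=
  supertr (dmx iu D *m dmx iv D *m dmx ix D *m dmx iy D).

(* Since the partial derivatives of the potentials are
   monomials up to scalars, (d_x W, d_y W) = (3 x^2, 4 y^3) and
   (d_u V, d_v V) = (12 u^11, 2 v), the residue
   Res[g dx dy / (3x^2, 4y^3)] is 1/12 times the coefficient of x^1 y^2 in g
   (as a polynomial in the remaining variables u, v), and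
   Res[g du dv / (12 u^11, 2v)] is 1/24 times the coefficient of u^10 v^0. *)
Definition res_W (g : Rg) : Rg :=
  \sum_(m <- msupp g | (m ix == 1%N) && (m iy == 2%N))
     (12%:R)^-1 *: (g@_m *: 'X_[m - (U_(ix) + U_(iy) *+ 2)%MM]).

Definition res_V (g : Rg) : Rg :=
  \sum_(m <- msupp g | (m iu == 10%N) && (m iv == 0%N))
     (24%:R)^-1 *: (g@_m *: 'X_[m - (U_(iu) *+ 10)%MM]).

(* left and right quantum dimensions (m = n = 2, sign (-1)^3 = -1) *)
Definition qdim_l (d0 d1 : 'M[Rg]_2) : Rg :=
  - res_W (qdim_integrand (twdiff d0 d1)).
Definition qdim_r (d0 d1 : 'M[Rg]_2) : Rg :=
  - res_V (qdim_integrand (twdiff d0 d1)).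

Definition set_u0 (p : Rg) : Rg :=
  p \mPo [tuple (if i == iu then 0 else 'X_i : Rg) | i < 4].

Definition d1_X0 : 'M[Rg]_2 :=
  \matrix_(i < 2, j < 2)
    (if i == 0 then (if j == 0 then py ^+ 2 - pv else - px)
     else (if j == 0 then px ^+ 2 else py ^+ 2 + pv)).
Definition d0_X0 : 'M[Rg]_2 := \adj d1_X0.

Definition su (s : C) (k : nat) : Rg := (s ^+ k) *: pu ^+ k.

Definition d1_Xu (s t : C) : 'M[Rg]_2 :=
  let a := py ^+ 2 - pv + (1 / 2%:R) *: (px * su s 2)
           + ((2%:R * t + 1) / 8%:R) *: su s 6 in
  let b := - px + py * su s 1 + ((t + 1) / 4%:R) *: su s 4 in
  let c := px ^+ 2 + py * px * su s 1 + (t / 4%:R) *: (px * su s 4)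
           + ((2%:R * t + 1) / 4%:R) *: (py * su s 5)
           - ((9%:R * t + 5%:R) / 48%:R) *: su s 8 in
  let d := py ^+ 2 + pv + (1 / 2%:R) *: (px * su s 2)
           + ((2%:R * t + 1) / 8%:R) *: su s 6 in
  \matrix_(i < 2, j < 2)
    (if i == 0 then (if j == 0 then a else b) else (if j == 0 then c else d)).
Definition d0_Xu (s t : C) : 'M[Rg]_2 := \adj (d1_Xu s t).

End MF.

(* The grading pins down the weighted degree of every entry of d_Y, so each entry
   is a combination of at most seven monomials, and setting u = 0 fixes the
   coefficients of the u-free ones.  In d^1 d^0 = (W - V) 1 the off-diagonal
   entries force d^0 = (d^1)^#, and the diagonal ones leave twelve polynomial
   equations in the fourteen remaining coefficients.  If the coefficient B1 of
   u y in d^1_01 vanishes, these equations make every entry even in y, and then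
   the left quantum dimension vanishes because its integrand is odd in y.
   Otherwise they are solved in terms of s = B1, t and two free parameters al, be,
   and the even automorphism of degree zero
   diag([[1, 0], [al u^2, 1]], [[1, 0], [be u^2, 1]]) conjugates d_Y into d_{X_u}:
   Y and X_u are isomorphic already as matrix factorisations. *)

From HB Require Import structures.
From mathcomp Require Import all_boot all_order all_algebra.
From mathcomp Require Import reals complex.
From mathcomp.multinomials Require Import mpoly.
From mathcomp Require Import ring lra zify.

Set Implicit Arguments.
Unset Strict Implicit.
Unset Printing Implicit Defensive.

Import Order.TTheory GRing.Theory Num.Theory.
Local Open Scope ring_scope.

(** * Polynomials as lists of terms *)

(* An exponent vector (a, b, c, d) stands for the monomial u^a v^b x^c y^d. *)
Definition exps := (nat * nat * nat * nat)%type.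

Definition exps_add (a b : exps) : exps :=
  let: (a0, a1, a2, a3) := a in let: (b0, b1, b2, b3) := b in
  (a0 + b0, a1 + b1, a2 + b2, a3 + b3)%N.

Definition mnm_of (e : exps) : 'X_{1..4} :=
  let: (a, b, c, d) := e in [multinom nth 0%N [:: a; b; c; d] i | i < 4].

Lemma mnm_ofE e (i : 'I_4) :
  mnm_of e i = nth 0%N [:: e.1.1.1; e.1.1.2; e.1.2; e.2] i.
Proof. by case: e => [[[a b] c] d]; rewrite /mnm_of mnmE. Qed.

Lemma mnm_ofD a b : (mnm_of a + mnm_of b)%MM = mnm_of (exps_add a b).
Proof.
apply/mnmP => i; rewrite mnmDE !mnm_ofE.
case: a b => [[[a0 a1] a2] a3] [[[b0 b1] b2] b3] /=.
by case: i => [[|[|[|[|i]]]] Hi].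
Qed.

Lemma mnm_of_inj : injective mnm_of.
Proof.
move=> [[[a0 a1] a2] a3] [[[b0 b1] b2] b3] /mnmP H.
have := H (inord 0); have := H (inord 1); have := H (inord 2); have := H (inord 3).
by rewrite !mnm_ofE /= !inordK //= => -> -> -> ->.
Qed.

Lemma mnm_of_coords (m : 'X_{1..4}) : m = mnm_of (m iu, m iv, m ix, m iy).
Proof.
apply/mnmP => i; rewrite mnm_ofE /= /iu /iv /ix /iy.
by case: i => [[|[|[|[|i]]]] Hi] //=; congr (m _); apply/val_inj; rewrite /= inordK.
Qed.

Lemma mnm_of0 : mnm_of (0, 0, 0, 0)%N = 0%MM.
Proof. by apply/mnmP => i; rewrite mnm_ofE mnm0E; case: i => [[|[|[|[|i]]]] Hi]. Qed.

(* The coefficients of [tsum s] are computed by [terms_coef], which reduces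
   every identity between polynomials below to finitely many identities
   between scalars. *)
Section Terms.
Variable C : comNzRingType.
Notation P := {mpoly C[4]}.

Definition terms := seq (C * exps).

Definition tsum (s : terms) : P := \sum_(p <- s) p.1 *: 'X_[mnm_of p.2].

Definition terms_mul (s1 s2 : terms) : terms :=
  [seq (a.1 * b.1, exps_add a.2 b.2) | a <- s1, b <- s2].

Definition terms_scale (c : C) (s : terms) : terms := [seq (c * a.1, a.2) | a <- s].

Fixpoint terms_exp (s : terms) (n : nat) : terms :=
  if n is n'.+1 then terms_mul s (terms_exp s n') else [:: (1, (0, 0, 0, 0)%N)].

Definition terms_coef (k : exps) (s : terms) : C :=
  foldr (fun p acc => (if p.2 == k then p.1 else 0) + acc) 0 s.

Lemma tsum_nil : tsum [::] = 0.
Proof. by rewrite /tsum big_nil. Qed.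

Lemma tsum_cons a s : tsum (a :: s) = a.1 *: 'X_[mnm_of a.2] + tsum s.
Proof. by rewrite /tsum big_cons. Qed.

Lemma tsum1 c e : tsum [:: (c, e)] = c *: 'X_[mnm_of e].
Proof. by rewrite tsum_cons tsum_nil addr0. Qed.

Lemma tsum_one : tsum [:: (1, (0, 0, 0, 0)%N)] = 1.
Proof. by rewrite tsum1 mnm_of0 mpolyX0 scale1r. Qed.

Lemma tsum_cat s1 s2 : tsum (s1 ++ s2) = tsum s1 + tsum s2.
Proof. by rewrite /tsum big_cat. Qed.

Lemma tsum_scale c s : tsum (terms_scale c s) = c *: tsum s.
Proof.
elim: s => [|a s IH]; first by rewrite tsum_nil scaler0.
by rewrite /= !tsum_cons IH scalerDr scalerA.
Qed.

Lemma tsum_opp s : tsum (terms_scale (-1) s) = - tsum s.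
Proof. by rewrite tsum_scale scaleN1r. Qed.

Lemma tsum_mul s1 s2 : tsum (terms_mul s1 s2) = tsum s1 * tsum s2.
Proof.
elim: s1 => [|a s1 IH]; first by rewrite /terms_mul /= tsum_nil mul0r.
rewrite /terms_mul /= tsum_cat -/(terms_mul s1 s2) IH tsum_cons mulrDl.
congr (_ + _); clear IH; elim: s2 => [|b s2 IH2]; first by rewrite /= tsum_nil mulr0.
rewrite /= !tsum_cons IH2 mulrDr; congr (_ + _).
by rewrite -scalerAl -scalerAr scalerA -mpolyXD mnm_ofD.
Qed.

Lemma tsum_exp s n : tsum (terms_exp s n) = tsum s ^+ n.
Proof. by elim: n => [|n IH]; rewrite ?tsum_one // exprS /= tsum_mul IH. Qed.

Lemma mcoeff_tsum k s : (tsum s)@_(mnm_of k) = terms_coef k s.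
Proof.
elim: s => [|a s IH]; first by rewrite tsum_nil mcoeff0.
rewrite tsum_cons mcoeffD IH mcoeffZ mcoeffX (inj_eq mnm_of_inj) /=.
by case: eqP => _; rewrite ?mulr1 ?mulr0.
Qed.

Lemma terms_coef_congr s1 s2 k : tsum s1 = tsum s2 -> terms_coef k s1 = terms_coef k s2.
Proof. by move=> E; rewrite -!mcoeff_tsum E. Qed.

Lemma terms_coef_notin k s : k \notin [seq p.2 | p <- s] -> terms_coef k s = 0.
Proof.
elim: s => [|p s IH] //=; rewrite inE negb_or => /andP[kp ks].
by rewrite eq_sym (negbTE kp) add0r IH.
Qed.

Lemma terms_coef_eq0 k s : (forall p, p \in s -> p.2 = k -> p.1 = 0) -> terms_coef k s = 0.
Proof.
elim: s => [|p s IH] //= H.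
rewrite IH ?addr0; last by move=> q Hq; apply: H; rewrite inE Hq orbT.
by case: eqP => // E; apply: H => //; rewrite inE eqxx.
Qed.

Lemma terms_coef_map (g : exps -> C) L k : uniq L ->
  terms_coef k [seq (g e, e) | e <- L] = if k \in L then g k else 0.
Proof.
elim: L => [|a L IH] //= /andP[aL uL]; rewrite IH // inE.
by case: (eqVneq a k) => [<-|] /=; rewrite ?(negbTE aL) ?addr0 ?add0r.
Qed.

Lemma mpoly_termsE (p : P) (L : seq exps) : uniq L ->
  (forall e, mnm_of e \in msupp p -> e \in L) ->
  p = tsum [seq (p@_(mnm_of e), e) | e <- L].
Proof.
move=> uL HL; apply/mpolyP => m.
rewrite (mnm_of_coords m) mcoeff_tsum terms_coef_map //.
by case: ifP => // /negbT/(contra (HL _)); apply: memN_msupp_eq0.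
Qed.

Lemma tsum_eq_on (K : seq exps) s1 s2 :
  all (fun p => p.2 \in K) s1 -> all (fun p => p.2 \in K) s2 ->
  (forall k, k \in K -> terms_coef k s1 = terms_coef k s2) -> tsum s1 = tsum s2.
Proof.
move=> /allP H1 /allP H2 H; apply/mpolyP => m.
rewrite (mnm_of_coords m) !mcoeff_tsum; set k := (_, _, _, _).
have [/H //|Hk] := boolP (k \in K).
by rewrite !terms_coef_notin //; apply: contra Hk => /mapP[p Hp ->]; [apply: H2 | apply: H1].
Qed.

Lemma mpolyX_tsum (i : 'I_4) e : U_(i)%MM = mnm_of e -> 'X_i = tsum [:: (1, e)] :> P.
Proof. by move=> H; rewrite tsum1 scale1r -H. Qed.

End Terms.

Section CoordinateTerms.
Variable C : fieldType.

Lemma pu_tsum : pu C = tsum [:: (1, (1, 0, 0, 0)%N)].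
Proof.
apply: mpolyX_tsum; apply/mnmP => j; rewrite mnm1E mnm_ofE -(inj_eq val_inj) /=.
by case: j => [[|[|[|[|j]]]] Hj]; rewrite /iu inordK.
Qed.

Lemma pv_tsum : pv C = tsum [:: (1, (0, 1, 0, 0)%N)].
Proof.
apply: mpolyX_tsum; apply/mnmP => j; rewrite mnm1E mnm_ofE -(inj_eq val_inj) /=.
by case: j => [[|[|[|[|j]]]] Hj]; rewrite /iv inordK.
Qed.

Lemma px_tsum : px C = tsum [:: (1, (0, 0, 1, 0)%N)].
Proof.
apply: mpolyX_tsum; apply/mnmP => j; rewrite mnm1E mnm_ofE -(inj_eq val_inj) /=.
by case: j => [[|[|[|[|j]]]] Hj]; rewrite /ix inordK.
Qed.

Lemma py_tsum : py C = tsum [:: (1, (0, 0, 0, 1)%N)].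
Proof.
apply: mpolyX_tsum; apply/mnmP => j; rewrite mnm1E mnm_ofE -(inj_eq val_inj) /=.
by case: j => [[|[|[|[|j]]]] Hj]; rewrite /iy inordK.
Qed.

End CoordinateTerms.

(* [cbn] unfolds the term lists quickly but leaves the ssrnat arithmetic on
   exponents to [/=]; [/=] alone is very slow on these lists. *)
Ltac eval_terms := cbn; rewrite /=.

Ltac tsum_of :=
  rewrite ?pu_tsum ?pv_tsum ?px_tsum ?py_tsum;
  repeat progress rewrite -?tsum_exp -?tsum_mul -?tsum_opp -?tsum_scale -?tsum_cat.

Ltac tsum_of_in H :=
  rewrite ?pu_tsum ?pv_tsum ?px_tsum ?py_tsum in H;
  repeat progress rewrite -?tsum_exp -?tsum_mul -?tsum_opp -?tsum_scale -?tsum_cat in H.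

(** * Weighted homogeneity and the specialisation u = 0 *)

Definition wdeg6 (e : exps) : nat :=
  let: (a, b, c, d) := e in (a + 6 * b + 4 * c + 3 * d)%N.

Lemma wdeg_mnm_of e : wdeg (mnm_of e) = (wdeg6 e)%:R / 6%:R.
Proof.
case: e => [[[a b] c] d].
rewrite /wdeg !big_ord_recr big_ord0 !mnm_ofE /= /weight /iu /iv /ix /iy.
have E k (i : 'I_4) : (k < 4)%N -> (i == inord k) = (val i == k).
  by move=> Hk; rewrite -(inj_eq val_inj) /= inordK.
by rewrite !E //= !natrD ?natrM; field.
Qed.

(* [complete_wdeg6 n L] checks, by enumerating a box of exponents, that [L]
   contains every exponent of weight [n]; the box suffices for [n <= 8]. *)
Definition complete_wdeg6 (n : nat) (L : seq exps) : bool :=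
  all (fun a => all (fun b => all (fun c => all (fun d =>
    (wdeg6 (a, b, c, d) != n) || ((a, b, c, d) \in L))
    (iota 0 3)) (iota 0 3)) (iota 0 2)) (iota 0 9).

Lemma complete_wdeg6P n L e : (n <= 8)%N -> complete_wdeg6 n L -> wdeg6 e = n -> e \in L.
Proof.
case: e => [[[a b] c] d] /= Hn HL Hw.
have ia : a \in iota 0 9 by rewrite mem_iota; lia.
have ib : b \in iota 0 2 by rewrite mem_iota; lia.
have ic : c \in iota 0 3 by rewrite mem_iota; lia.
have id : d \in iota 0 3 by rewrite mem_iota; lia.
move: HL => /allP/(_ a ia)/allP/(_ b ib)/allP/(_ c ic)/allP/(_ d id).
by rewrite /= Hw eqxx.
Qed.

Definition exps_wdeg4 : seq exps := [:: (4,0,0,0); (0,0,1,0); (1,0,0,1)]%N.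
Definition exps_wdeg6 : seq exps :=
  [:: (6,0,0,0); (0,1,0,0); (2,0,1,0); (3,0,0,1); (0,0,0,2)]%N.
Definition exps_wdeg8 : seq exps :=
  [:: (8,0,0,0); (2,1,0,0); (4,0,1,0); (0,0,2,0); (5,0,0,1); (1,0,1,1); (2,0,0,2)]%N.

Lemma exps_wdeg4_complete : complete_wdeg6 4 exps_wdeg4. Proof. by vm_compute. Qed.
Lemma exps_wdeg6_complete : complete_wdeg6 6 exps_wdeg6. Proof. by vm_compute. Qed.
Lemma exps_wdeg8_complete : complete_wdeg6 8 exps_wdeg8. Proof. by vm_compute. Qed.

Section Homogeneous.
Variable C : fieldType.
Notation P := {mpoly C[4]}.

Lemma whomog_termsE (p : P) n L :
  (n <= 8)%N -> complete_wdeg6 n L -> uniq L -> whomog (n%:R / 6%:R) p ->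
  p = tsum [seq (p@_(mnm_of e), e) | e <- L].
Proof.
move=> Hn HL uL Hp; apply: mpoly_termsE => // e /Hp; rewrite wdeg_mnm_of => Hw.
apply: (complete_wdeg6P Hn HL); apply/eqP; rewrite -(eqr_nat rat).
by rewrite -[X in X == _](divfK (_ : 6%:R != 0)) // Hw divfK.
Qed.

Lemma whomog_wdeg6 (p : P) q e : whomog q p -> p@_(mnm_of e) != 0 -> q = (wdeg6 e)%:R / 6%:R.
Proof. by move=> Hp He; rewrite -wdeg_mnm_of Hp // mcoeff_msupp. Qed.

Lemma whomog_tsum n (s : terms C) :
  all (fun p => wdeg6 p.2 == n) s -> whomog (n%:R / 6%:R) (tsum s).
Proof.
move=> /allP H m; rewrite mcoeff_msupp (mnm_of_coords m) mcoeff_tsum => Hm.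
have /mapP[p Hp ->] : (m iu, m iv, m ix, m iy) \in [seq p.2 | p <- s].
  by apply: contraNT Hm => /terms_coef_notin ->.
by rewrite wdeg_mnm_of (eqP (H p Hp)).
Qed.

Lemma whomog0 q : whomog q (0 : P).
Proof. by move=> m; rewrite msupp0. Qed.

Lemma whomogN q (p : P) : whomog q p -> whomog q (- p).
Proof. by move=> Hp m; rewrite (perm_mem (msuppN p)); apply: Hp. Qed.

End Homogeneous.

Section SetU0.
Variable C : fieldType.
Notation P := {mpoly C[4]}.

Lemma set_u0X (m : 'X_{1..4}) : set_u0 'X_[m] = if m iu == 0%N then 'X_[m] else 0 :> P.
Proof.
rewrite /set_u0 comp_mpolyX [X in _ = if _ then X else _]mpolyXE_id.
rewrite !big_ord_recl big_ord0 !tnth_mktuple.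
have E0 : (ord0 : 'I_4) = iu by apply/val_inj; rewrite /= inordK.
rewrite -!E0 eqxx /= !big_ord0.
case: eqP => [->|/eqP H]; first by rewrite !expr0 !mul1r.
by rewrite expr0n (negbTE H) !mul0r.
Qed.

Lemma mcoeff_set_u0 (p : P) e : e.1.1.1 = 0%N -> (set_u0 p)@_(mnm_of e) = p@_(mnm_of e).
Proof.
move=> He; rewrite [in RHS](mpolyE p) /set_u0 comp_mpolyEX !raddf_sum /=.
apply: eq_bigr => m _; rewrite -/(set_u0 'X_[m]) set_u0X !mcoeffZ.
case: eqP => // Hm; rewrite mcoeff0 mcoeffX; case: eqP => [E|]; last by rewrite !mulr0.
by case: Hm; rewrite E mnm_ofE /iu inordK.
Qed.

End SetU0.

(** * Two-by-two matrices and parity in y *)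

Section Matrices2.
Variable R : comNzRingType.

Definition mx2 (a b c d : R) : 'M[R]_2 :=
  \matrix_(i < 2, j < 2)
    (if i == 0 then (if j == 0 then a else b) else (if j == 0 then c else d)).

Lemma ord2P (i : 'I_2) : i = 0 \/ i = 1.
Proof. by case: i => [[|[|i]] Hi]; [left | right | by []]; apply/val_inj. Qed.

Lemma mx2_entries (Q : 'I_2 -> 'I_2 -> R -> Prop) a b c d :
  Q 0 0 a -> Q 0 1 b -> Q 1 0 c -> Q 1 1 d -> forall i j, Q i j (mx2 a b c d i j).
Proof. by move=> Ha Hb Hc Hd i j; rewrite !mxE; case: (ord2P i) => ->; case: (ord2P j) => ->. Qed.

Lemma mx2_eta (A : 'M[R]_2) : A = mx2 (A 0 0) (A 0 1) (A 1 0) (A 1 1).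
Proof.
apply/matrixP => i j; rewrite !mxE.
by case: (ord2P i) => ->; case: (ord2P j) => ->.
Qed.

Lemma mx2_mul (a b c d a' b' c' d' : R) :
  mx2 a b c d *m mx2 a' b' c' d' =
  mx2 (a * a' + b * c') (a * b' + b * d') (c * a' + d * c') (c * b' + d * d').
Proof.
apply/matrixP => i j; rewrite !mxE !big_ord_recl big_ord0 addr0 !mxE.
have -> : lift ord0 ord0 = 1 :> 'I_2 by apply/val_inj.
by case: (ord2P i) => ->; case: (ord2P j) => ->.
Qed.

Lemma mx2_one : mx2 1 0 0 1 = 1%:M.
Proof.
apply/matrixP => i j; rewrite !mxE.
by case: (ord2P i) => ->; case: (ord2P j) => ->.
Qed.

Lemma adj_mx2 (a b c d : R) : \adj (mx2 a b c d) = mx2 d (- b) (- c) a.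
Proof.
apply/matrixP => i j; rewrite !mxE /cofactor det_mx11 !mxE.
by case: i => [[|[|i]] Hi]; case: j => [[|[|j]] Hj] //=;
  rewrite ?expr1 ?exprS ?mulN1r ?mulNr ?opprK ?expr0 ?mul1r.
Qed.

Lemma block_mx_entries (Q : 'I_(2 + 2) -> 'I_(2 + 2) -> R -> Prop) (A B D E : 'M[R]_2) :
  (forall i j, Q (lshift 2 i) (lshift 2 j) (A i j)) ->
  (forall i j, Q (lshift 2 i) (rshift 2 j) (B i j)) ->
  (forall i j, Q (rshift 2 i) (lshift 2 j) (D i j)) ->
  (forall i j, Q (rshift 2 i) (rshift 2 j) (E i j)) ->
  forall i j, Q i j (block_mx A B D E i j).
Proof.
move=> HA HB HD HE i j; rewrite -(splitK i) -(splitK j).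
by case: (split i) => a; case: (split j) => c;
  rewrite /= ?block_mxEul ?block_mxEur ?block_mxEdl ?block_mxEdr.
Qed.

Lemma mx2_eqP (a b c d a' b' c' d' : R) :
  mx2 a b c d = mx2 a' b' c' d' -> [/\ a = a', b = b', c = c' & d = d'].
Proof.
move/matrixP=> E; have := E 0 0; have := E 0 1; have := E 1 0; have := E 1 1.
by rewrite !mxE /= => -> -> -> ->.
Qed.

Lemma scalar_mx2 (a : R) : a%:M = mx2 a 0 0 a.
Proof. by apply/matrixP => i j; rewrite !mxE; case: (ord2P i) => ->; case: (ord2P j) => ->. Qed.

Lemma adj_mx2_mul (A B : 'M[R]_2) : \adj (A *m B) = \adj B *m \adj A.
Proof.
rewrite [A]mx2_eta [B]mx2_eta mx2_mul !adj_mx2 mx2_mul.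
by congr (mx2 _ _ _ _); ring.
Qed.

End Matrices2.

Section YParity.
Variable C : fieldType.
Notation P := {mpoly C[4]}.

Definition y_parity (b : bool) (p : P) :=
  forall m : 'X_{1..4}, odd (m iy) != b -> p@_m = 0.

Lemma y_parity0 b : y_parity b 0.
Proof. by move=> m _; rewrite mcoeff0. Qed.

Lemma y_parityD b p q : y_parity b p -> y_parity b q -> y_parity b (p + q).
Proof. by move=> Hp Hq m H; rewrite mcoeffD Hp // Hq // addr0. Qed.

Lemma y_parityN b p : y_parity b p -> y_parity b (- p).
Proof. by move=> Hp m H; rewrite mcoeffN Hp // oppr0. Qed.

Lemma y_parityB b p q : y_parity b p -> y_parity b q -> y_parity b (p - q).
Proof. by move=> Hp Hq; apply: y_parityD => //; apply: y_parityN. Qed.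

Lemma y_parityM b1 b2 p q :
  y_parity b1 p -> y_parity b2 q -> y_parity (b1 (+) b2) (p * q).
Proof.
move=> Hp Hq m H; rewrite mcoeffM big1 // => [[k1 k2]] /= /eqP E.
have Ho : odd (m iy) = odd (k1 iy) (+) odd (k2 iy) by rewrite -oddD -mnmDE -E.
have [H1|H1] := eqVneq (odd (k1 iy)) b1; last by rewrite Hp ?mul0r.
by rewrite Hq ?mulr0 //; apply: contra H => /eqP H2; rewrite Ho H1 H2.
Qed.

Lemma y_parity_sum b (I : finType) (F : I -> P) :
  (forall i, y_parity b (F i)) -> y_parity b (\sum_i F i).
Proof. by move=> H; elim/big_rec: _ => [|i x _ Hx]; [exact: y_parity0 | exact: y_parityD]. Qed.

Lemma y_parity_deriv b (i : 'I_4) p :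
  y_parity b p -> y_parity (b (+) (i == iy)) (mderiv i p).
Proof.
move=> Hp m H; rewrite mcoeff_deriv Hp ?mul0rn //.
apply: contra H; rewrite mnmDE mnm1E oddD => /eqP <-.
by case: (i == iy); rewrite /= ?addbT ?negbK ?addbF.
Qed.

Lemma y_parity_tsum b (s : terms C) :
  all (fun p => (odd p.2.2 == b) || (p.1 == 0)) s -> y_parity b (tsum s).
Proof.
move=> /allP H m Hm; rewrite (mnm_of_coords m) mcoeff_tsum.
apply: terms_coef_eq0 => p Hp E.
by have := H p Hp; rewrite E /= (negbTE Hm) => /eqP.
Qed.

Lemma y_parity_mulmx b1 b2 n m k (A : 'M[P]_(n, m)) (B : 'M[P]_(m, k)) :
  (forall i j, y_parity b1 (A i j)) -> (forall i j, y_parity b2 (B i j)) ->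
  forall i j, y_parity (b1 (+) b2) ((A *m B) i j).
Proof. by move=> HA HB i j; rewrite mxE; apply: y_parity_sum => l; exact: y_parityM. Qed.

Lemma y_parity_dmx b (k : 'I_4) (A : 'M[P]_(2 + 2)) :
  (forall i j, y_parity b (A i j)) -> forall i j, y_parity (b (+) (k == iy)) (dmx k A i j).
Proof. by move=> HA i j; rewrite mxE; apply: y_parity_deriv. Qed.

(* Only the derivative in y changes the y-parity, so the integrand is odd in
   y, while [res_W] only reads coefficients of even degree [y^2]. *)
Lemma qdim_l_y_even (d0 d1 : 'M[P]_2) :
  (forall i j, y_parity false (d0 i j)) -> (forall i j, y_parity false (d1 i j)) ->
  qdim_l d0 d1 = 0.
Proof.
move=> H0 H1.
have HD : forall i j, y_parity false (twdiff d0 d1 i j).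
  by apply: (block_mx_entries (Q := fun _ _ => y_parity false)) => // i j;
    rewrite mxE; apply: y_parity0.
have [nu nv nx] : [/\ (iu == iy) = false, (iv == iy) = false & (ix == iy) = false].
  by rewrite /iu /iv /ix /iy -!(inj_eq val_inj) /= !inordK.
have Hu := y_parity_dmx (k := iu) HD; have Hv := y_parity_dmx (k := iv) HD.
have Hx := y_parity_dmx (k := ix) HD; have Hy := y_parity_dmx (k := iy) HD.
rewrite nu in Hu; rewrite nv in Hv; rewrite nx in Hx; rewrite eqxx in Hy.
have Hg : y_parity true (qdim_integrand (twdiff d0 d1)).
  have := y_parity_mulmx (y_parity_mulmx (y_parity_mulmx Hu Hv) Hx) Hy.
  rewrite /qdim_integrand /supertr /mxtrace; move: (_ *m _) => M HM.
  by apply: y_parityB; apply: y_parity_sum => i; rewrite !mxE; exact: HM.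
rewrite /qdim_l /res_W big1_seq ?oppr0 // => m /andP[/andP[_ /eqP Hm] _].
by rewrite Hg ?scale0r ?scaler0 // Hm.
Qed.

End YParity.

(** * The coefficient equations for Y *)

Section Shape.
Variable C : numFieldType.
Notation P := {mpoly C[4]}.

Definition wdeg4_terms (c1 c2 c3 : C) : terms C :=
  [:: (c1, (4,0,0,0)%N); (c2, (0,0,1,0)%N); (c3, (1,0,0,1)%N)].
Definition wdeg6_terms (c1 c2 c3 c4 c5 : C) : terms C :=
  [:: (c1, (6,0,0,0)%N); (c2, (0,1,0,0)%N); (c3, (2,0,1,0)%N); (c4, (3,0,0,1)%N);
      (c5, (0,0,0,2)%N)].
Definition wdeg8_terms (c1 c2 c3 c4 c5 c6 c7 : C) : terms C :=
  [:: (c1, (8,0,0,0)%N); (c2, (2,1,0,0)%N); (c3, (4,0,1,0)%N); (c4, (0,0,2,0)%N);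
      (c5, (5,0,0,1)%N); (c6, (1,0,1,1)%N); (c7, (2,0,0,2)%N)].

(* [d1_gen A1 ... D3] is
     [[y^2 - v + A1 u^2 x + A2 u^3 y + A3 u^6,  - x + B1 u y + B2 u^4],
      [x^2 + C1 u x y + C2 u^4 x + C3 u^2 y^2 + C4 u^2 v + C5 u^5 y + C6 u^8,
       y^2 + v + D1 u^2 x + D2 u^3 y + D3 u^6]],
   the general matrix with homogeneous entries of weights 1, 2/3, 4/3, 1 that
   specialises to [d1_X0] at u = 0; [d0_gen] is the same for [d0_X0]. *)
Definition d1_gen (A1 A2 A3 B1 B2 C1 C2 C3 C4 C5 C6 D1 D2 D3 : C) : 'M[P]_2 :=
  mx2 (tsum (wdeg6_terms A3 (-1) A1 A2 1)) (tsum (wdeg4_terms B2 (-1) B1))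
      (tsum (wdeg8_terms C6 C4 C2 1 C5 C1 C3)) (tsum (wdeg6_terms D3 1 D1 D2 1)).

Definition d0_gen (P1 P2 P3 Q1 Q2 R1 R2 R3 R4 R5 R6 W1 W2 W3 : C) : 'M[P]_2 :=
  mx2 (tsum (wdeg6_terms P3 1 P1 P2 1)) (tsum (wdeg4_terms Q2 1 Q1))
      (tsum (wdeg8_terms R6 R4 R2 (-1) R5 R1 R3)) (tsum (wdeg6_terms W3 (-1) W1 W2 1)).

Definition d1_degrees (q : 'I_(2 + 2) -> rat) : Prop :=
  [/\ 1 + q (lshift 2 0) - q (rshift 2 0) = 6%:R / 6%:R,
      1 + q (lshift 2 0) - q (rshift 2 1) = 4%:R / 6%:R,
      1 + q (lshift 2 1) - q (rshift 2 0) = 8%:R / 6%:R &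
      1 + q (lshift 2 1) - q (rshift 2 1) = 6%:R / 6%:R].

Lemma mcoeff_set_u0_tsum (p : P) tgt e c :
  set_u0 p = tsum tgt -> e.1.1.1 = 0%N -> terms_coef e tgt = c -> p@_(mnm_of e) = c.
Proof. by move=> Hp He <-; rewrite -mcoeff_set_u0 // Hp mcoeff_tsum. Qed.

(* A nonzero u-free coefficient of [set_u0 p] fixes the degree of [p]. *)
Lemma entry_terms (p : P) q n L (tgt : terms C) e :
  (n <= 8)%N -> complete_wdeg6 n L -> uniq L -> whomog q p -> set_u0 p = tsum tgt ->
  e.1.1.1 = 0%N -> terms_coef e tgt != 0 -> wdeg6 e = n ->
  q = n%:R / 6%:R /\ p = tsum [seq (p@_(mnm_of e), e) | e <- L].
Proof.
move=> Hn HL uL Hp Hu He Hne Hw.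
have Hq : q = n%:R / 6%:R.
  by rewrite -Hw; apply: (whomog_wdeg6 Hp); rewrite (mcoeff_set_u0_tsum Hu He erefl).
by split=> //; apply: whomog_termsE Hn HL uL _; rewrite -Hq.
Qed.

Ltac nonzero_coef :=
  eval_terms; rewrite ?mulr1 ?mul1r ?addr0 ?add0r ?mulN1r ?oppr_eq0 ?oner_eq0 //.

Ltac u0_coef T := apply: (mcoeff_set_u0_tsum T); [done | eval_terms; ring].

Lemma d1_shape (qY : 'I_(2 + 2) -> rat) (d0 d1 : 'M[P]_2) :
  graded_mf qY d0 d1 -> map_mx (@set_u0 C) d1 = d1_X0 C ->
  d1_degrees qY /\ exists A1 A2 A3 B1 B2 C1 C2 C3 C4 C5 C6 D1 D2 D3 : C,
    d1 = d1_gen A1 A2 A3 B1 B2 C1 C2 C3 C4 C5 C6 D1 D2 D3.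
Proof.
move=> Hg Hu.
have G i j : whomog (1 + qY (lshift 2 i) - qY (rshift 2 j)) (d1 i j).
  by have := Hg (lshift 2 i) (rshift 2 j); rewrite /twdiff block_mxEur.
have U i j : set_u0 (d1 i j) = d1_X0 C i j by rewrite -Hu mxE.
have T00 := U 0 0; rewrite /d1_X0 mxE /= in T00; tsum_of_in T00.
have T01 := U 0 1; rewrite /d1_X0 mxE /= in T01; tsum_of_in T01.
have T10 := U 1 0; rewrite /d1_X0 mxE /= in T10; tsum_of_in T10.
have T11 := U 1 1; rewrite /d1_X0 mxE /= in T11; tsum_of_in T11.
have [q00 S00] := entry_terms (n := 6) (e := (0,0,0,2)%N) isT exps_wdeg6_complete isT
  (G 0 0) T00 erefl ltac:(nonzero_coef) erefl.
have [q01 S01] := entry_terms (n := 4) (e := (0,0,1,0)%N) isT exps_wdeg4_complete isT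
  (G 0 1) T01 erefl ltac:(nonzero_coef) erefl.
have [q10 S10] := entry_terms (n := 8) (e := (0,0,2,0)%N) isT exps_wdeg8_complete isT
  (G 1 0) T10 erefl ltac:(nonzero_coef) erefl.
have [q11 S11] := entry_terms (n := 6) (e := (0,0,0,2)%N) isT exps_wdeg6_complete isT
  (G 1 1) T11 erefl ltac:(nonzero_coef) erefl.
have c00v : (d1 0 0)@_(mnm_of (0,1,0,0)%N) = -1 by u0_coef T00.
have c00y : (d1 0 0)@_(mnm_of (0,0,0,2)%N) = 1 by u0_coef T00.
have c01x : (d1 0 1)@_(mnm_of (0,0,1,0)%N) = -1 by u0_coef T01.
have c10x : (d1 1 0)@_(mnm_of (0,0,2,0)%N) = 1 by u0_coef T10.
have c11v : (d1 1 1)@_(mnm_of (0,1,0,0)%N) = 1 by u0_coef T11.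
have c11y : (d1 1 1)@_(mnm_of (0,0,0,2)%N) = 1 by u0_coef T11.
split; first by [].
exists (d1 0 0)@_(mnm_of (2,0,1,0)%N), (d1 0 0)@_(mnm_of (3,0,0,1)%N),
  (d1 0 0)@_(mnm_of (6,0,0,0)%N), (d1 0 1)@_(mnm_of (1,0,0,1)%N),
  (d1 0 1)@_(mnm_of (4,0,0,0)%N), (d1 1 0)@_(mnm_of (1,0,1,1)%N),
  (d1 1 0)@_(mnm_of (4,0,1,0)%N), (d1 1 0)@_(mnm_of (2,0,0,2)%N),
  (d1 1 0)@_(mnm_of (2,1,0,0)%N), (d1 1 0)@_(mnm_of (5,0,0,1)%N),
  (d1 1 0)@_(mnm_of (8,0,0,0)%N), (d1 1 1)@_(mnm_of (2,0,1,0)%N),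
  (d1 1 1)@_(mnm_of (3,0,0,1)%N), (d1 1 1)@_(mnm_of (6,0,0,0)%N).
by rewrite [LHS]mx2_eta {1}S00 {1}S01 {1}S10 {1}S11 /= c00v c00y c01x c10x c11v c11y.
Qed.

Lemma d0_X0E : d0_X0 C = mx2 (py C ^+ 2 + pv C) (- - px C) (- px C ^+ 2) (py C ^+ 2 - pv C).
Proof.
by rewrite /d0_X0 -[d1_X0 C]/(mx2 (py C ^+ 2 - pv C) (- px C) (px C ^+ 2) (py C ^+ 2 + pv C))
  adj_mx2.
Qed.

Lemma d0_shape (qY : 'I_(2 + 2) -> rat) (d0 d1 : 'M[P]_2) :
  graded_mf qY d0 d1 -> map_mx (@set_u0 C) d0 = d0_X0 C ->
  exists P1 P2 P3 Q1 Q2 R1 R2 R3 R4 R5 R6 W1 W2 W3 : C,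
    d0 = d0_gen P1 P2 P3 Q1 Q2 R1 R2 R3 R4 R5 R6 W1 W2 W3.
Proof.
move=> Hg Hu.
have G i j : whomog (1 + qY (rshift 2 i) - qY (lshift 2 j)) (d0 i j).
  by have := Hg (rshift 2 i) (lshift 2 j); rewrite /twdiff block_mxEdl.
have U i j : set_u0 (d0 i j) = d0_X0 C i j by rewrite -Hu mxE.
have T00 := U 0 0; rewrite d0_X0E mxE /= in T00; tsum_of_in T00.
have T01 := U 0 1; rewrite d0_X0E mxE /= in T01; tsum_of_in T01.
have T10 := U 1 0; rewrite d0_X0E mxE /= in T10; tsum_of_in T10.
have T11 := U 1 1; rewrite d0_X0E mxE /= in T11; tsum_of_in T11.
have [q00 S00] := entry_terms (n := 6) (e := (0,0,0,2)%N) isT exps_wdeg6_complete isT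
  (G 0 0) T00 erefl ltac:(nonzero_coef) erefl.
have [q01 S01] := entry_terms (n := 4) (e := (0,0,1,0)%N) isT exps_wdeg4_complete isT
  (G 0 1) T01 erefl ltac:(nonzero_coef) erefl.
have [q10 S10] := entry_terms (n := 8) (e := (0,0,2,0)%N) isT exps_wdeg8_complete isT
  (G 1 0) T10 erefl ltac:(nonzero_coef) erefl.
have [q11 S11] := entry_terms (n := 6) (e := (0,0,0,2)%N) isT exps_wdeg6_complete isT
  (G 1 1) T11 erefl ltac:(nonzero_coef) erefl.
have c00v : (d0 0 0)@_(mnm_of (0,1,0,0)%N) = 1 by u0_coef T00.
have c00y : (d0 0 0)@_(mnm_of (0,0,0,2)%N) = 1 by u0_coef T00.
have c01x : (d0 0 1)@_(mnm_of (0,0,1,0)%N) = 1 by u0_coef T01.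
have c10x : (d0 1 0)@_(mnm_of (0,0,2,0)%N) = -1 by u0_coef T10.
have c11v : (d0 1 1)@_(mnm_of (0,1,0,0)%N) = -1 by u0_coef T11.
have c11y : (d0 1 1)@_(mnm_of (0,0,0,2)%N) = 1 by u0_coef T11.
exists (d0 0 0)@_(mnm_of (2,0,1,0)%N), (d0 0 0)@_(mnm_of (3,0,0,1)%N),
  (d0 0 0)@_(mnm_of (6,0,0,0)%N), (d0 0 1)@_(mnm_of (1,0,0,1)%N),
  (d0 0 1)@_(mnm_of (4,0,0,0)%N), (d0 1 0)@_(mnm_of (1,0,1,1)%N),
  (d0 1 0)@_(mnm_of (4,0,1,0)%N), (d0 1 0)@_(mnm_of (2,0,0,2)%N),
  (d0 1 0)@_(mnm_of (2,1,0,0)%N), (d0 1 0)@_(mnm_of (5,0,0,1)%N),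
  (d0 1 0)@_(mnm_of (8,0,0,0)%N), (d0 1 1)@_(mnm_of (2,0,1,0)%N),
  (d0 1 1)@_(mnm_of (3,0,0,1)%N), (d0 1 1)@_(mnm_of (6,0,0,0)%N).
by rewrite [LHS]mx2_eta {1}S00 {1}S01 {1}S10 {1}S11 /= c00v c00y c01x c10x c11v c11y.
Qed.

Lemma adj_d1_gen (A1 A2 A3 B1 B2 C1 C2 C3 C4 C5 C6 D1 D2 D3 : C) :
  \adj (d1_gen A1 A2 A3 B1 B2 C1 C2 C3 C4 C5 C6 D1 D2 D3) =
  d0_gen D1 D2 D3 (- B1) (- B2) (- C1) (- C2) (- C3) (- C4) (- C5) (- C6) A1 A2 A3.
Proof. by rewrite adj_mx2 -!tsum_opp /= !mulN1r !opprK. Qed.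

End Shape.

Section CoefficientEquations.
Variable C : numFieldType.

Lemma lin_solve (c X f g : C) : c != 0 -> g = 0 -> c * (X - f) = g -> X = f.
Proof. by move=> Hc -> /eqP; rewrite mulf_eq0 (negbTE Hc) subr_eq0 => /eqP. Qed.

Lemma lin_solveN (c X f g : C) : c != 0 -> g = 0 -> c * (X - f) = - g -> X = f.
Proof. by move=> Hc Hg; rewrite Hg oppr0; apply: lin_solve. Qed.

Lemma lin_solve2 (c X f g h k : C) :
  c != 0 -> g = 0 -> h = 0 -> c * (X - f) = g + k * h -> X = f.
Proof. by move=> Hc Hg ->; rewrite mulr0 addr0; apply: lin_solve. Qed.

Ltac solve_for c E :=
  first [ apply: (lin_solve (c := c) _ E); [ | by field ]
        | apply: (lin_solveN (c := c) _ E); [ | by field ] ].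

(* The unknowns are the coefficients of [d1_gen] and [d0_gen];
   the equations are the coefficients of the off-diagonal entries of
   [d1 *m d0 = (W - V)%:M], and they say that [d0] is the adjugate of [d1]. *)
Lemma adj_coefs (A1 A2 A3 B1 B2 C1 C2 C3 C4 C5 C6 D1 D2 D3
                 P1 P2 P3 Q1 Q2 R1 R2 R3 R4 R5 R6 W1 W2 W3 : C) :
  Q1 + B1 = 0 -> - Q2 - B2 = 0 -> A1 - W1 = 0 ->
  A1 * Q1 + A2 - W2 + B1 * W1 = 0 -> A1 * Q2 + A3 - W3 + B2 * W1 = 0 ->
  P1 - D1 = 0 -> P2 + C1 * P1 + D1 * R1 - D2 = 0 -> P3 + C2 * P1 + D1 * R2 - D3 = 0 ->
  C1 + R1 = 0 -> C3 + R3 = 0 -> C4 + R4 = 0 -> C2 + C4 * P1 + R2 + D1 * R4 = 0 ->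
  C4 * P2 + C5 + R5 + D2 * R4 = 0 -> C4 * P3 + C6 + R6 + D3 * R4 = 0 ->
  [/\ Q1 = - B1, Q2 = - B2, W1 = A1, W2 = A2 & W3 = A3] /\
  [/\ P1 = D1, P2 = D2 & P3 = D3] /\
  [/\ R1 = - C1, R2 = - C2, R3 = - C3 & R4 = - C4] /\ R5 = - C5 /\ R6 = - C6.
Proof.
have o : (1 : C) != 0 by rewrite oner_eq0.
move=> e1 e2 e3 e4 e5 e6 e7 e8 e9 e10 e11 e12 e13 e14.
have hQ1 : Q1 = - B1 by solve_for (1 : C) e1.
have hQ2 : Q2 = - B2 by solve_for (1 : C) e2.
have hW1 : W1 = A1 by solve_for (1 : C) e3.
have hP1 : P1 = D1 by solve_for (1 : C) e6.
have hR1 : R1 = - C1 by solve_for (1 : C) e9.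
have hR3 : R3 = - C3 by solve_for (1 : C) e10.
have hR4 : R4 = - C4 by solve_for (1 : C) e11.
subst Q1 Q2 W1 P1 R1 R3 R4.
have hW2 : W2 = A2 by solve_for (1 : C) e4.
have hW3 : W3 = A3 by solve_for (1 : C) e5.
have hP2 : P2 = D2 by solve_for (1 : C) e7.
have hR2 : R2 = - C2 by solve_for (1 : C) e12.
subst W2 W3 P2 R2.
have hP3 : P3 = D3 by solve_for (1 : C) e8.
have hR5 : R5 = - C5 by solve_for (1 : C) e13.
subst P3 R5.
have hR6 : R6 = - C6 by solve_for (1 : C) e14.
by subst.
Qed.

(* The coefficients of u x^2 y, u^2 x y^2, u^2 v x, u^3 y^3, u^3 v y, u^4 x^2,
   u^5 x y, u^6 y^2, u^6 v, u^8 x, u^9 y and u^12 in the diagonal entry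
   [(d1 *m \adj d1) 0 0 = W - V], for [d1 = d1_gen A1 ... D3]. *)
Definition coef_eqs (A1 A2 A3 B1 B2 C1 C2 C3 C4 C5 C6 D1 D2 D3 : C) : Prop :=
  [/\ C1 - B1 = 0, D1 + A1 + C3 - B1 * C1 = 0, - D1 + A1 + C4 = 0,
      D2 + A2 - B1 * C3 = 0 & - D2 + A2 - B1 * C4 = 0] /\
  [/\ A1 * D1 + C2 - B2 = 0, A1 * D2 + A2 * D1 + C5 - B1 * C2 - B2 * C1 = 0,
      D3 + A2 * D2 + A3 - B1 * C5 - B2 * C3 = 0, - D3 + A3 - B2 * C4 = 0 &
      A1 * D3 + A3 * D1 + C6 - B2 * C2 = 0] /\
  A2 * D3 + A3 * D2 - B1 * C6 - B2 * C5 = 0 /\ A3 * D3 - B2 * C6 + 1 = 0.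

Lemma coef_eqs_B1_eq0 (A1 A2 A3 B1 B2 C1 C2 C3 C4 C5 C6 D1 D2 D3 : C) :
  coef_eqs A1 A2 A3 B1 B2 C1 C2 C3 C4 C5 C6 D1 D2 D3 -> B1 = 0 ->
  [/\ A2 = 0, D2 = 0, C1 = 0 & C5 = 0].
Proof.
have o : (1 : C) != 0 by rewrite oner_eq0.
have t2 : (2%:R : C) != 0 by rewrite pnatr_eq0.
move=> [[f1 f2 f3 f4 f5] [[f6 f7 f8 f9 f10] _]] B1_0; subst B1.
have hC1 : C1 = 0 by solve_for (1 : C) f1.
have hA2 : A2 = 0.
  have f45 : (D2 + A2 - 0 * C3) + (- D2 + A2 - 0 * C4) = 0 by rewrite f4 f5 addr0.
  by solve_for (2%:R : C) f45.
subst C1 A2.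
have hD2 : D2 = 0 by solve_for (1 : C) f5.
subst D2.
by split=> //; solve_for (1 : C) f7.
Qed.

Lemma coef_eqs_solve (A1 A2 A3 B1 B2 C1 C2 C3 C4 C5 C6 D1 D2 D3 : C) :
  coef_eqs A1 A2 A3 B1 B2 C1 C2 C3 C4 C5 C6 D1 D2 D3 -> B1 != 0 ->
  exists t al be : C, let s := B1 in
  (t ^+ 2 = 1 / 3%:R /\ s ^+ 12 = - 576%:R * (26%:R * t - 15%:R)) /\
  (B2 = (t + 1) / 4%:R * s ^+ 4 /\ C1 = s) /\
  (A1 = s ^+ 2 / 2%:R - be /\ A2 = be * s /\
      A3 = (2%:R * t + 1) / 8%:R * s ^+ 6 + be * ((t + 1) / 4%:R * s ^+ 4)) /\
  (D1 = s ^+ 2 / 2%:R + al /\ D2 = - (al * s) /\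
      D3 = (2%:R * t + 1) / 8%:R * s ^+ 6 - al * ((t + 1) / 4%:R * s ^+ 4)) /\
  (C2 = t / 4%:R * s ^+ 4 - al * (s ^+ 2 / 2%:R) + be * (s ^+ 2 / 2%:R) + al * be /\
      C3 = be - al /\ C4 = al + be /\
      C5 = (2%:R * t + 1) / 4%:R * s ^+ 5 - al * be * s /\
      C6 = - ((9%:R * t + 5%:R) / 48%:R * s ^+ 8) - al * ((2%:R * t + 1) / 8%:R * s ^+ 6)
           + be * ((2%:R * t + 1) / 8%:R * s ^+ 6) - al * be * ((t + 1) / 4%:R * s ^+ 4)).
Proof.
have o : (1 : C) != 0 by rewrite oner_eq0.
have t2 : (2%:R : C) != 0 by rewrite pnatr_eq0.
move=> [[f1 f2 f3 f4 f5] [[f6 f7 f8 f9 f10] [f11 f12]]] sN0.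
exists (4%:R * B2 / B1 ^+ 4 - 1), (- D2 / B1), (A2 / B1); cbv zeta.
set t := 4%:R * B2 / B1 ^+ 4 - 1; set al := - D2 / B1; set be := A2 / B1.
have hB2 : B2 = (t + 1) / 4%:R * B1 ^+ 4 by rewrite /t; field.
have hA2 : A2 = be * B1 by rewrite /be; field.
have hD2 : D2 = - (al * B1) by rewrite /al; field.
clearbody t al be; subst B2 A2 D2; move: B1 sN0 f1 f2 f3 f4 f5 f6 f7 f8 f9 f10 f11 f12.
move=> s sN0 f1 f2 f3 f4 f5 f6 f7 f8 f9 f10 f11 f12.
have hC1 : C1 = s by solve_for (1 : C) f1.
subst C1; have hC3 : C3 = be - al by solve_for s f4.
have hC4 : C4 = al + be by solve_for s f5.
subst C3 C4; have hD1 : D1 = A1 + al + be by solve_for (1 : C) f3.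
subst D1; have hA1 : A1 = s ^+ 2 / 2%:R - be by solve_for (2%:R : C) f2.
subst A1; have hC2 : C2 = t / 4%:R * s ^+ 4 - al * (s ^+ 2 / 2%:R) + be * (s ^+ 2 / 2%:R) + al * be.
  by solve_for (1 : C) f6.
subst C2; have hC5 : C5 = (2%:R * t + 1) / 4%:R * s ^+ 5 - al * be * s by solve_for (1 : C) f7.
subst C5; have hD3 : D3 = A3 - (t + 1) / 4%:R * s ^+ 4 * (al + be) by solve_for (1 : C) f9.
subst D3; have hA3 : A3 = (2%:R * t + 1) / 8%:R * s ^+ 6 + be * ((t + 1) / 4%:R * s ^+ 4).
  by solve_for (2%:R : C) f8.
subst A3.
have hs9 : - (3%:R / 16%:R) * s ^+ 9 != 0.
  by rewrite mulf_neq0 ?expf_neq0 // oppr_eq0 mulf_neq0 ?invr_eq0 ?pnatr_eq0.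
(* [s] times the equation for [C6] eliminates [C6] from the next one. *)
have ht : t ^+ 2 = 1 / 3%:R by apply: (lin_solve2 (k := s) hs9 f11 f10); field.
have ht0 : t ^+ 2 - 1 / 3%:R = 0 by rewrite ht subrr.
have hC6 : C6 = - ((9%:R * t + 5%:R) / 48%:R * s ^+ 8) - al * ((2%:R * t + 1) / 8%:R * s ^+ 6)
           + be * ((2%:R * t + 1) / 8%:R * s ^+ 6) - al * be * ((t + 1) / 4%:R * s ^+ 4).
  by apply: (lin_solve2 (k := s ^+ 8 / 16%:R) o f10 ht0); field.
subst C6.
set M := - 576%:R * (26%:R * t - 15%:R).
have hs : s ^+ 12 = M.
  (* Modulo [t^2 = 1/3], [- M] times the last equation is [s^12 - M]. *)
  have g12 := congr1 (fun x => - M * x) f12; rewrite /= mulr0 in g12.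
  apply: (lin_solve2 (k := M * ((t + 1) / 4%:R * s ^+ 4) * (s ^+ 8 / 16%:R)
                            + s ^+ 12 * (- 2028%:R + M * (3%:R / 32%:R - t / 64%:R))) o g12 ht0).
  by rewrite /M; field.
by do !split => //; ring.
Qed.

End CoefficientEquations.

Lemma is_mf_mul (R : fieldType) (f : {mpoly R[4]}) d0 d1 : is_mf f d0 d1 -> d1 *m d0 = f%:M.
Proof.
rewrite /is_mf /twdiff mulmx_block !mul0mx !mulmx0 !addr0 !add0r (scalar_mx_block 2 2).
by case/eq_block_mx.
Qed.

Section MFEquations.
Variable C : numFieldType.
Notation P := {mpoly C[4]}.

Lemma diff_eq0 (l r e : C) : l = r -> e = l - r -> e = 0.
Proof. by move=> -> ->; rewrite subrr. Qed.

Ltac coef_eq E k := apply: (diff_eq0 (terms_coef_congr k E)); eval_terms; ring.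

Lemma mf_gen_adj (A1 A2 A3 B1 B2 C1 C2 C3 C4 C5 C6 D1 D2 D3
                  P1 P2 P3 Q1 Q2 R1 R2 R3 R4 R5 R6 W1 W2 W3 : C) :
  is_mf (Wpot C - Vpot C) (d0_gen P1 P2 P3 Q1 Q2 R1 R2 R3 R4 R5 R6 W1 W2 W3)
                          (d1_gen A1 A2 A3 B1 B2 C1 C2 C3 C4 C5 C6 D1 D2 D3) ->
  d0_gen P1 P2 P3 Q1 Q2 R1 R2 R3 R4 R5 R6 W1 W2 W3 =
    \adj (d1_gen A1 A2 A3 B1 B2 C1 C2 C3 C4 C5 C6 D1 D2 D3).
Proof.
move/is_mf_mul; rewrite /d0_gen /d1_gen mx2_mul scalar_mx2 => /mx2_eqP[_ E01 E10 _].
rewrite -tsum_nil in E01 E10; tsum_of_in E01; tsum_of_in E10.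
have g1 : Q1 + B1 = 0 by coef_eq E01 (1,0,0,3)%N.
have g2 : - Q2 - B2 = 0 by coef_eq E01 (4,1,0,0)%N.
have g3 : A1 - W1 = 0 by coef_eq E01 (2,0,2,0)%N.
have g4 : A1 * Q1 + A2 - W2 + B1 * W1 = 0 by coef_eq E01 (3,0,1,1)%N.
have g5 : A1 * Q2 + A3 - W3 + B2 * W1 = 0 by coef_eq E01 (6,0,1,0)%N.
have g6 : P1 - D1 = 0 by coef_eq E10 (2,0,3,0)%N.
have g7 : P2 + C1 * P1 + D1 * R1 - D2 = 0 by coef_eq E10 (3,0,2,1)%N.
have g8 : P3 + C2 * P1 + D1 * R2 - D3 = 0 by coef_eq E10 (6,0,2,0)%N.
have g9 : C1 + R1 = 0 by coef_eq E10 (1,0,1,3)%N.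
have g10 : C3 + R3 = 0 by coef_eq E10 (2,0,0,4)%N.
have g11 : C4 + R4 = 0 by coef_eq E10 (2,2,0,0)%N.
have g12 : C2 + C4 * P1 + R2 + D1 * R4 = 0 by coef_eq E10 (4,1,1,0)%N.
have g13 : C4 * P2 + C5 + R5 + D2 * R4 = 0 by coef_eq E10 (5,1,0,1)%N.
have g14 : C4 * P3 + C6 + R6 + D3 * R4 = 0 by coef_eq E10 (8,1,0,0)%N.
have [[-> -> -> -> ->] [[-> -> ->] [[-> -> -> ->] [-> ->]]]] :=
  adj_coefs g1 g2 g3 g4 g5 g6 g7 g8 g9 g10 g11 g12 g13 g14.
by rewrite adj_d1_gen.
Qed.

Lemma mf_gen_coef_eqs (A1 A2 A3 B1 B2 C1 C2 C3 C4 C5 C6 D1 D2 D3 : C) :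
  is_mf (Wpot C - Vpot C) (\adj (d1_gen A1 A2 A3 B1 B2 C1 C2 C3 C4 C5 C6 D1 D2 D3))
    (d1_gen A1 A2 A3 B1 B2 C1 C2 C3 C4 C5 C6 D1 D2 D3) ->
  coef_eqs A1 A2 A3 B1 B2 C1 C2 C3 C4 C5 C6 D1 D2 D3.
Proof.
rewrite adj_d1_gen => /is_mf_mul; rewrite /d0_gen /d1_gen mx2_mul scalar_mx2 => /mx2_eqP[E _ _ _].
rewrite /Wpot /Vpot in E; tsum_of_in E.
have h1 : C1 - B1 = 0 by coef_eq E (1,0,2,1)%N.
have h2 : D1 + A1 + C3 - B1 * C1 = 0 by coef_eq E (2,0,1,2)%N.
have h3 : - D1 + A1 + C4 = 0 by coef_eq E (2,1,1,0)%N.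
have h4 : D2 + A2 - B1 * C3 = 0 by coef_eq E (3,0,0,3)%N.
have h5 : - D2 + A2 - B1 * C4 = 0 by coef_eq E (3,1,0,1)%N.
have h6 : A1 * D1 + C2 - B2 = 0 by coef_eq E (4,0,2,0)%N.
have h7 : A1 * D2 + A2 * D1 + C5 - B1 * C2 - B2 * C1 = 0 by coef_eq E (5,0,1,1)%N.
have h8 : D3 + A2 * D2 + A3 - B1 * C5 - B2 * C3 = 0 by coef_eq E (6,0,0,2)%N.
have h9 : - D3 + A3 - B2 * C4 = 0 by coef_eq E (6,1,0,0)%N.
have h10 : A1 * D3 + A3 * D1 + C6 - B2 * C2 = 0 by coef_eq E (8,0,1,0)%N.
have h11 : A2 * D3 + A3 * D2 - B1 * C6 - B2 * C5 = 0 by coef_eq E (9,0,0,1)%N.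
have h12 : A3 * D3 - B2 * C6 + 1 = 0 by coef_eq E (12,0,0,0)%N.
by split; [split | split; [split |]].
Qed.

End MFEquations.

Ltac coefs_ring :=
  move=> k; rewrite !inE;
  repeat (case/orP; [move/eqP->; eval_terms; ring |]); move/eqP->; eval_terms; ring.

(** * The isomorphism with X_u *)

Section Gauge.
Variable C : numFieldType.
Notation P := {mpoly C[4]}.

Definition gauge (c : C) : 'M[P]_2 := mx2 1 0 (c *: pu C ^+ 2) 1.

Lemma gaugeK c : gauge (- c) *m gauge c = 1%:M.
Proof.
rewrite /gauge mx2_mul -mx2_one !mulr1 !mul1r !mulr0 !mul0r !addr0 add0r.
by rewrite scaleNr addNr.
Qed.

Lemma gaugeKV c : gauge c *m gauge (- c) = 1%:M.
Proof. by rewrite -{1}(opprK c) gaugeK. Qed.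

Lemma adj_gauge c : \adj (gauge c) = gauge (- c).
Proof. by rewrite adj_mx2 oppr0 /gauge scaleNr. Qed.

Variables (s t : C).

Definition Xu_a : P := py C ^+ 2 - pv C + (1 / 2%:R) *: (px C * su s 2)
  + ((2%:R * t + 1) / 8%:R) *: su s 6.
Definition Xu_b : P := - px C + py C * su s 1 + ((t + 1) / 4%:R) *: su s 4.
Definition Xu_c : P := px C ^+ 2 + py C * px C * su s 1 + (t / 4%:R) *: (px C * su s 4)
  + ((2%:R * t + 1) / 4%:R) *: (py C * su s 5) - ((9%:R * t + 5%:R) / 48%:R) *: su s 8.
Definition Xu_d : P := py C ^+ 2 + pv C + (1 / 2%:R) *: (px C * su s 2)
  + ((2%:R * t + 1) / 8%:R) *: su s 6.

Lemma d1_XuE : d1_Xu s t = mx2 Xu_a Xu_b Xu_c Xu_d.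
Proof. by []. Qed.

Lemma d0_XuE : d0_Xu s t = mx2 Xu_d (- Xu_b) (- Xu_c) Xu_a.
Proof. by rewrite /d0_Xu d1_XuE adj_mx2. Qed.

(* The solutions of [coef_eqs] with [B1 = s != 0] (see [coef_eqs_solve]). *)
Definition d1_sol (al be : C) : 'M[P]_2 :=
  d1_gen (s ^+ 2 / 2%:R - be) (be * s)
    ((2%:R * t + 1) / 8%:R * s ^+ 6 + be * ((t + 1) / 4%:R * s ^+ 4))
    s ((t + 1) / 4%:R * s ^+ 4) s
    (t / 4%:R * s ^+ 4 - al * (s ^+ 2 / 2%:R) + be * (s ^+ 2 / 2%:R) + al * be)
    (be - al) (al + be) ((2%:R * t + 1) / 4%:R * s ^+ 5 - al * be * s)
    (- ((9%:R * t + 5%:R) / 48%:R * s ^+ 8) - al * ((2%:R * t + 1) / 8%:R * s ^+ 6)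
      + be * ((2%:R * t + 1) / 8%:R * s ^+ 6) - al * be * ((t + 1) / 4%:R * s ^+ 4))
    (s ^+ 2 / 2%:R + al) (- (al * s))
    ((2%:R * t + 1) / 8%:R * s ^+ 6 - al * ((t + 1) / 4%:R * s ^+ 4)).

Lemma d1_Xu_gauge al be : d1_Xu s t *m gauge be = gauge al *m d1_sol al be.
Proof.
rewrite d1_XuE /d1_sol /d1_gen /gauge !mx2_mul /Xu_a /Xu_b /Xu_c /Xu_d /su.
rewrite -tsum_one -tsum_nil; tsum_of.
congr (mx2 _ _ _ _).
- by apply: (tsum_eq_on (K := exps_wdeg6)); [exact: erefl | exact: erefl | coefs_ring].
- by apply: (tsum_eq_on (K := exps_wdeg4)); [exact: erefl | exact: erefl | coefs_ring].
- by apply: (tsum_eq_on (K := exps_wdeg8)); [exact: erefl | exact: erefl | coefs_ring].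
- by apply: (tsum_eq_on (K := exps_wdeg6)); [exact: erefl | exact: erefl | coefs_ring].
Qed.

(* Taking adjugates turns the relation for [d1] into the one for [d0]. *)
Lemma d0_Xu_gauge al be : d0_Xu s t *m gauge al = gauge be *m \adj (d1_sol al be).
Proof.
have := congr1 (@adjugate _ 2) (d1_Xu_gauge al be).
rewrite !adj_mx2_mul !adj_gauge -/(d0_Xu s t) => E.
rewrite -[d0_Xu s t]mul1mx -(gaugeKV be) -(mulmxA (gauge be)) E.
by rewrite -!mulmxA gaugeK mulmx1.
Qed.

End Gauge.

Section HmfIso.
Variable C : fieldType.
Notation P := {mpoly C[4]}.

Lemma even_block_diag (A B : 'M[P]_2) : even_mx (block_mx A 0 0 B).
Proof. by split; [rewrite block_mxKur | rewrite block_mxKdl]. Qed.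

Lemma gr_homotopic_refl (qM qN : 'I_(2 + 2) -> rat) (dM dN f : 'M[P]_(2 + 2)) :
  gr_homotopic qM dM qN dN f f.
Proof.
exists 0; split; first by split; apply/matrixP => i j; rewrite !mxE.
split; first by move=> i j; rewrite mxE; apply: whomog0.
by rewrite mulmx0 mul0mx addr0 subrr.
Qed.

Lemma hmf_gr_iso_of_inverse (qM qN : 'I_(2 + 2) -> rat) (dM dN f g : 'M[P]_(2 + 2)) :
  gr_morph qM dM qN dN f -> even_mx g -> mx_homog 0 qM qN g ->
  g *m f = 1%:M -> f *m g = 1%:M -> hmf_gr_iso qM dM qN dN.
Proof.
move=> [ef [hf cf]] eg hg gf fg; exists f, g.
split=> //; split; last by rewrite gf fg; split; apply: gr_homotopic_refl.
split=> //; split=> //.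
by rewrite -[g *m dN]mulmx1 -fg mulmxA -(mulmxA g dN f) cf mulmxA gf mul1mx.
Qed.

End HmfIso.

Section XuIso.
Variable C : numFieldType.
Notation P := {mpoly C[4]}.
Variables (s t : C) (qY : 'I_(2 + 2) -> rat).
Hypothesis degY : d1_degrees qY.

Ltac whomog_by_weight n :=
  match goal with |- whomog ?q _ => have -> : q = n%:R / 6%:R by lra end;
  tsum_of; apply: whomog_tsum; exact: erefl.

Lemma Xu_graded : graded_mf qY (d0_Xu s t) (d1_Xu s t).
Proof.
case: degY => d00 d01 d10 d11.
apply: (block_mx_entries (Q := fun i j => whomog (1 + qY i - qY j))).
- by move=> i j; rewrite mxE; apply: whomog0.
- rewrite d1_XuE /Xu_a /Xu_b /Xu_c /Xu_d /su.
  apply: (mx2_entries (Q := fun i j => whomog (1 + qY (lshift 2 i) - qY (rshift 2 j)))).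
  + by whomog_by_weight 6%N.
  + by whomog_by_weight 4%N.
  + by whomog_by_weight 8%N.
  + by whomog_by_weight 6%N.
- rewrite d0_XuE /Xu_a /Xu_b /Xu_c /Xu_d /su.
  apply: (mx2_entries (Q := fun i j => whomog (1 + qY (rshift 2 i) - qY (lshift 2 j)))).
  + by whomog_by_weight 6%N.
  + by apply: whomogN; whomog_by_weight 4%N.
  + by apply: whomogN; whomog_by_weight 8%N.
  + by whomog_by_weight 6%N.
- by move=> i j; rewrite mxE; apply: whomog0.
Qed.

Lemma gauge_block_homog (a b : C) : mx_homog 0 qY qY (block_mx (gauge a) 0 0 (gauge b)).
Proof.
case: degY => d00 d01 d10 d11.
apply: (block_mx_entries (Q := fun i j => whomog (0 + qY i - qY j))).
- apply: (mx2_entries (Q := fun i j => whomog (0 + qY (lshift 2 i) - qY (lshift 2 j)))).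
  + by rewrite -tsum_one; whomog_by_weight 0%N.
  + exact: whomog0.
  + by whomog_by_weight 2%N.
  + by rewrite -tsum_one; whomog_by_weight 0%N.
- by move=> i j; rewrite mxE; apply: whomog0.
- by move=> i j; rewrite mxE; apply: whomog0.
- apply: (mx2_entries (Q := fun i j => whomog (0 + qY (rshift 2 i) - qY (rshift 2 j)))).
  + by rewrite -tsum_one; whomog_by_weight 0%N.
  + exact: whomog0.
  + by whomog_by_weight 2%N.
  + by rewrite -tsum_one; whomog_by_weight 0%N.
Qed.

Lemma hmf_gr_iso_sol (al be : C) :
  hmf_gr_iso qY (twdiff (\adj (d1_sol s t al be)) (d1_sol s t al be))
             qY (twdiff (d0_Xu s t) (d1_Xu s t)).
Proof.
have gaugeK2 a b :
    block_mx (gauge (- a)) 0 0 (gauge (- b)) *m block_mx (gauge a) 0 0 (gauge b) = 1%:M.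
  by rewrite mulmx_block !mulmx0 !mul0mx !addr0 !add0r !gaugeK -scalar_mx_block.
apply: (hmf_gr_iso_of_inverse (f := block_mx (gauge al) 0 0 (gauge be))
                              (g := block_mx (gauge (- al)) 0 0 (gauge (- be)))).
- split; first exact: even_block_diag.
  split; first exact: gauge_block_homog.
  rewrite /twdiff !mulmx_block !mulmx0 !mul0mx !addr0 !add0r.
  by rewrite (d1_Xu_gauge s t al be) (d0_Xu_gauge s t al be).
- exact: even_block_diag.
- exact: gauge_block_homog.
- exact: gaugeK2.
- by rewrite -{1}(opprK al) -{1}(opprK be) gaugeK2.
Qed.

End XuIso.

Lemma Y_solution (C : numFieldType) (qY : 'I_(2 + 2) -> rat) (d0 d1 : 'M[{mpoly C[4]}]_2) :
  is_mf (Wpot C - Vpot C) d0 d1 -> graded_mf qY d0 d1 -> qdim_l d0 d1 != 0 ->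
  map_mx (@set_u0 C) d0 = d0_X0 C -> map_mx (@set_u0 C) d1 = d1_X0 C ->
  d1_degrees qY /\ exists s t al be : C,
    [/\ t ^+ 2 = 1 / 3%:R, s ^+ 12 = - 576%:R * (26%:R * t - 15%:R),
        d1 = d1_sol s t al be & d0 = \adj d1].
Proof.
move=> Hmf Hg Hq Hu0 Hu1.
have [degY [A1 [A2 [A3 [B1 [B2 [C1 [C2 [C3 [C4 [C5 [C6 [D1 [D2 [D3 E1]]]]]]]]]]]]]]] :=
  d1_shape Hg Hu1.
have [P1 [P2 [P3 [Q1 [Q2 [R1 [R2 [R3 [R4 [R5 [R6 [W1 [W2 [W3 E0]]]]]]]]]]]]]] :=
  d0_shape Hg Hu0.
subst d0 d1; split=> //; have Ead := mf_gen_adj Hmf; rewrite Ead in Hq Hmf *.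
have eqs := mf_gen_coef_eqs Hmf.
have [B1_0 | B1_neq0] := eqVneq B1 0.
  have [A2_0 D2_0 C1_0 C5_0] := coef_eqs_B1_eq0 eqs B1_0; subst.
  case/eqP: Hq; rewrite adj_d1_gen; apply: qdim_l_y_even;
    apply: (mx2_entries (Q := fun _ _ => y_parity false)); apply: y_parity_tsum;
    by rewrite /= ?oppr0 ?eqxx ?orbT.
have [t [al [be [[ht hs] [[-> ->] [[-> [-> ->]] [[-> [-> ->]] [-> [-> [-> [-> ->]]]]]]]]]]] :=
  coef_eqs_solve eqs B1_neq0.
by exists B1, t, al, be; split; [exact: ht | exact: hs | reflexivity | reflexivity].
Qed.

Theorem lemma2p8 (R : realType) (qY : 'I_(2 + 2) -> rat)
    (d0 d1 : 'M[{mpoly R[i][4]}]_2) :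
  is_mf (Wpot R[i] - Vpot R[i]) d0 d1 ->
  graded_mf qY d0 d1 ->
  qdim_l d0 d1 != 0 -> qdim_r d0 d1 != 0 ->
  map_mx (@set_u0 R[i]) d0 = d0_X0 R[i] ->
  map_mx (@set_u0 R[i]) d1 = d1_X0 R[i] ->
  exists (s t : R[i]) (qX : 'I_(2 + 2) -> rat),
    t ^+ 2 = 1 / 3%:R /\
    s ^+ 12 = - 576%:R * (26%:R * t - 15%:R) /\
    graded_mf qX (d0_Xu s t) (d1_Xu s t) /\
    hmf_gr_iso qY (twdiff d0 d1) qX (twdiff (d0_Xu s t) (d1_Xu s t)).
Proof.
move=> Hmf Hg Hl _ Hu0 Hu1.
have [degY [s [t [al [be [Ht Hs E1 E0]]]]]] := Y_solution Hmf Hg Hl Hu0 Hu1.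
exists s, t, qY; do 2!split=> //; split; first exact: Xu_graded.
by rewrite E0 E1; apply: hmf_gr_iso_sol.
Qed.
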